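(* Let $\mathcal{S}$ be a category with $\Delta_1^*\subset\mathcal{S}\subset\mathbf{Pos}$ subcategories and $\Delta_1^*$ wide in $\mathcal{S}$. The following are equivalent: (1) every $\mathcal{S}$-morphism maps each $1$-dimensional interval onto an interval; (2) $\mathcal{S}$ does not contain the diagonal $[1]\to[1]^2$, $x\mapsto(x,x)$.
   Context: $[1]=\{0<1\}$, $[1]^n$ the product poset with componentwise order ($[1]^0=[0]$). An interval in a poset $P$ is a non-empty subset $[x,z]_P=\{y:x\leq y\leq z\}$; a $1$-dimensional interval in $[1]^n$ is one isomorphic to $[1]$, i.e. $\{x,y\}$ with $x<y$ differing in exactly one coordinate. $\Delta_1^*$ is the smallest subcategory of $\mathbf{Set}$ containing all functions between $[0]$ and $[1]$ and closed under Cartesian products of functions; its objects are the $[1]^n$ and it is generated by cofaces and codegeneracies (coordinate projections). ''Wide'' means $\mathcal{S}$ has the same objects as $\Delta_1^*$. $\mathbf{Pos}$ is the category of posets and monotone functions. *)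

From mathcomp Require Import all_boot.
Set Implicit Arguments. Unset Strict Implicit. Unset Printing Implicit Defensive.

(* [1]^n, as boolean vectors indexed by 'I_n; [1]^0 is the one-point poset. *)
Definition cube (n : nat) := {ffun 'I_n -> bool}.

Definition cle n (x y : cube n) : bool := [forall i, x i ==> y i].

Definition monotone m n (f : {ffun cube m -> cube n}) : Prop :=
  forall x y, cle x y -> cle (f x) (f y).

Definition idmap n : {ffun cube n -> cube n} := [ffun x => x].
Definition compmap m n p (g : {ffun cube n -> cube p}) (f : {ffun cube m -> cube n})
  : {ffun cube m -> cube p} := [ffun x => g (f x)].

(* Cartesian product of maps, using [1]^m x [1]^m' = [1]^(m+m') *)
Definition prodmap m n m' n' (f : {ffun cube m -> cube n}) (g : {ffun cube m' -> cube n'})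
  : {ffun cube (m + m') -> cube (n + n')} :=
  [ffun x : cube (m + m') =>
     let x1 : cube m := [ffun i => x (lshift m' i)] in
     let x2 : cube m' := [ffun j => x (rshift m j)] in
     [ffun k : 'I_(n + n') => match split k with
                              | inl i => f x1 i
                              | inr j => g x2 j end]].

Inductive Delta1 : forall m n, {ffun cube m -> cube n} -> Prop :=
| D1_base m n (f : {ffun cube m -> cube n}) :
    m <= 1 -> n <= 1 -> monotone f -> Delta1 f
| D1_id n : Delta1 (idmap n)
| D1_comp m n p (g : {ffun cube n -> cube p}) (f : {ffun cube m -> cube n}) :
    Delta1 g -> Delta1 f -> Delta1 (compmap g f)
| D1_prod m n m' n' (f : {ffun cube m -> cube n}) (g : {ffun cube m' -> cube n'}) :
    Delta1 f -> Delta1 g -> Delta1 (prodmap f g).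

(* A wide subcategory S with Delta_1^* <= S <= Pos (objects are the [1]^n). *)
Definition intermediate_cat (S : forall m n, {ffun cube m -> cube n} -> Prop) : Prop :=
  [/\ (forall n, S n n (idmap n)),
      (forall m n p (g : {ffun cube n -> cube p}) (f : {ffun cube m -> cube n}),
          S n p g -> S m n f -> S m p (compmap g f)),
      (forall m n (f : {ffun cube m -> cube n}), Delta1 f -> S m n f) &
      (forall m n (f : {ffun cube m -> cube n}), S m n f -> monotone f)].

Definition interval n (x z : cube n) : {set cube n} := [set y | cle x y && cle y z].

Definition is_interval n (A : {set cube n}) : Prop :=
  exists x z, cle x z /\ A = interval x z.

Definition one_dim n (x y : cube n) : Prop :=
  cle x y /\ #|[set i | x i != y i]| = 1.

Definition diag : {ffun cube 1 -> cube 2} := [ffun x : cube 1 => [ffun _ : 'I_2 => x ord0]].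

From mathcomp Require Import all_boot.
Set Implicit Arguments. Unset Strict Implicit. Unset Printing Implicit Defensive.

(* A pair x <= y of [1]^n is an interval iff x and y differ in at most one
   coordinate, so (1) fails exactly when some f in S sends the endpoints of a
   one-dimensional interval to points differing in two coordinates i < j.  Such
   an interval is the image of a coface [1] -> [1]^m, and composing coface, f
   and the projection [1]^n -> [1]^2 onto coordinates (i, j) yields the
   diagonal.  Conversely the diagonal itself maps [1] onto the two-point
   non-interval {(0,0), (1,1)}. *)

Lemma cube0_eq (x y : cube 0) : x = y.
Proof. by apply/ffunP => -[]. Qed.

Lemma cleP n (x y : cube n) : reflect (forall i, x i -> y i) (cle x y).
Proof. by apply: (iffP forallP) => H i; apply/implyP/H. Qed.

Lemma cle_refl n (x : cube n) : cle x x.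
Proof. exact/cleP. Qed.

Lemma cle_trans n (y x z : cube n) : cle x y -> cle y z -> cle x z.
Proof. by move=> /cleP xy /cleP yz; apply/cleP => i /xy /yz. Qed.

Lemma cle_neq n (x y : cube n) i : cle x y -> x i != y i -> x i = false /\ y i = true.
Proof. by move=> /cleP /(_ i); case: (x i); case: (y i) => // /(_ isT). Qed.

Lemma cube_neq n (x y : cube n) : x != y -> exists i, x i != y i.
Proof.
move=> neq_xy; apply/existsP; apply: contraR neq_xy => /existsPn eq_xy.
by apply/eqP/ffunP => i; apply/eqP/negPn/eq_xy.
Qed.

Lemma monotone_from0 n (f : {ffun cube 0 -> cube n}) : monotone f.
Proof. by move=> x y _; rewrite (cube0_eq x y) cle_refl. Qed.

Lemma monotone_to0 m (f : {ffun cube m -> cube 0}) : monotone f.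
Proof. by move=> x y _; apply/cleP => -[]. Qed.

Variant ord_succ_spec n : 'I_n.+1 -> Type :=
  | OrdZero : ord_succ_spec ord0
  | OrdLift (j : 'I_n) : ord_succ_spec (lift ord0 j).

Lemma ord_succP n (i : 'I_n.+1) : ord_succ_spec i.
Proof. by case: (unliftP ord0 i) => [j|] ->; constructor. Qed.

Definition ctail n (x : cube n.+1) : cube n := [ffun j => x (lift ord0 j)].

Definition ccons n (b : bool) (x : cube n) : cube n.+1 :=
  [ffun t => if unlift ord0 t is Some j then x j else b].

Lemma ccons0 n b (x : cube n) : ccons b x ord0 = b.
Proof. by rewrite ffunE unlift_none. Qed.

Lemma cconsS n b (x : cube n) j : ccons b x (lift ord0 j) = x j.
Proof. by rewrite ffunE liftK. Qed.

Lemma ccons_ctail n (x : cube n.+1) : ccons (x ord0) (ctail x) = x.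
Proof.
by apply/ffunP => t; case: (ord_succP t) => [|j]; rewrite ?ccons0 ?cconsS ?ffunE.
Qed.

Lemma ccons_split n b (x : cube n) (t : 'I_n.+1) :
  ccons b x t = if @split 1 n t is inr j then x j else b.
Proof.
case: splitP => [a Ha | j Hj].
  have -> : t = ord0 :> 'I_n.+1 by apply/val_inj; rewrite /= Ha; case: a Ha => -[].
  exact: ccons0.
have -> : t = lift ord0 j :> 'I_n.+1 by apply/val_inj; rewrite /= Hj.
exact: cconsS.
Qed.

Lemma ctail_rshift n (x : cube n.+1) : [ffun j => x (rshift 1 j)] = ctail x.
Proof. by apply/ffunP => j; rewrite !ffunE; congr (x _); apply/val_inj. Qed.

(* The next three lemmas are instances of [D1_prod] whose first factor is a map
   between [0] and [1]: [1] -> [0], the identity of [1], and a point [0] -> [1]. *)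
Lemma Delta1_tail m n (g : {ffun cube m -> cube n}) :
  Delta1 g -> Delta1 [ffun x : cube m.+1 => g (ctail x)].
Proof.
pose drop : {ffun cube 1 -> cube 0} := [ffun=> [ffun=> false]].
move=> Dg; have -> : [ffun x : cube m.+1 => g (ctail x)] = prodmap drop g.
  apply/ffunP => x; apply/ffunP => t; rewrite !ffunE ctail_rshift.
  by case: splitP => [[] // | j /val_inj ->].
exact: (@D1_prod 1 0 m n) _ _ (D1_base _ _ (monotone_to0 drop)) Dg.
Qed.

Lemma Delta1_keep_head m n (g : {ffun cube m -> cube n}) :
  Delta1 g -> Delta1 [ffun x : cube m.+1 => ccons (x ord0) (g (ctail x))].
Proof.
move=> Dg.
have -> : [ffun x : cube m.+1 => ccons (x ord0) (g (ctail x))] = prodmap (idmap 1) g.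
  apply/ffunP => x; apply/ffunP => t; rewrite ffunE ccons_split !ffunE ctail_rshift.
  by case: (@split 1 n t) => [a|//]; rewrite ffunE (ord1 a); congr (x _); apply/val_inj.
exact: (@D1_prod 1 1 m n) (D1_id 1) Dg.
Qed.

Lemma Delta1_cons m n b (g : {ffun cube m -> cube n}) :
  Delta1 g -> Delta1 [ffun x : cube m => ccons b (g x)].
Proof.
pose const_b : {ffun cube 0 -> cube 1} := [ffun _ => [ffun _ => b]].
move=> Dg; have -> : [ffun x : cube m => ccons b (g x)] = prodmap const_b g.
  apply/ffunP => x; apply/ffunP => t; rewrite ffunE ccons_split !ffunE.
  case: (@split 1 n t) => [a|j]; first by rewrite /const_b !ffunE.
  by congr (g _ _); apply/ffunP => k; rewrite !ffunE; congr (x _); apply/val_inj.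
exact: (@D1_prod 0 1 m n) _ _ (D1_base _ _ (monotone_from0 const_b)) Dg.
Qed.

Lemma Delta1_to0 m (f : {ffun cube m -> cube 0}) : Delta1 f.
Proof.
elim: m f => [|m IH] f; first exact: D1_base (monotone_from0 f).
have -> : f = [ffun x : cube m.+1 => [ffun y => f (ccons false y)] (ctail x)].
  by apply/ffunP => x; apply: cube0_eq.
exact/Delta1_tail/IH.
Qed.

Lemma Delta1_from0 n (p : cube n) : Delta1 [ffun _ : cube 0 => p].
Proof.
elim: n p => [|n IH] p; first exact: D1_base (monotone_from0 _).
have -> : [ffun _ : cube 0 => p] = [ffun x => ccons (p ord0) ([ffun _ => ctail p] x)].
  by apply/ffunP => x; rewrite !ffunE ccons_ctail.
exact/Delta1_cons/IH.
Qed.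

Definition coord n (i : 'I_n) : {ffun cube n -> cube 1} :=
  [ffun x : cube n => [ffun _ : 'I_1 => x i]].

Lemma Delta1_coord n (i : 'I_n) : Delta1 (coord i).
Proof.
elim: n i => [[] // | n IH] i; case: (ord_succP i) => [|i'].
  have -> : coord ord0 =
      [ffun x : cube n.+1 => ccons (x ord0) ([ffun=> [ffun=> false]] (ctail x))].
    apply/ffunP => x; rewrite [RHS]ffunE -[LHS]ccons_ctail.
    by congr ccons; [rewrite !ffunE | apply: cube0_eq].
  exact/Delta1_keep_head/Delta1_to0.
have -> : coord (lift ord0 i') = [ffun x => coord i' (ctail x)].
  by apply/ffunP => x; apply/ffunP => t; rewrite !ffunE.
exact/Delta1_tail/IH.
Qed.

Definition coord2 n (i j : 'I_n) : {ffun cube n -> cube 2} :=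
  [ffun x : cube n => [ffun t : 'I_2 => if t == ord0 then x i else x j]].

Lemma Delta1_coord2 n (i j : 'I_n) : i < j -> Delta1 (coord2 i j).
Proof.
elim: n i j => [[] // | n IH] i j.
case: (ord_succP j) => [|j'] lt_ij; first by rewrite ltn0 in lt_ij.
case: (ord_succP i) lt_ij => [|i'] lt_ij.
  have -> : coord2 ord0 (lift ord0 j') =
      [ffun x : cube n.+1 => ccons (x ord0) (coord j' (ctail x))].
    apply/ffunP => x; apply/ffunP => t.
    by case: (ord_succP t) => [|t']; rewrite !ffunE ?liftK ?unlift_none ?ffunE.
  exact/Delta1_keep_head/Delta1_coord.
have -> : coord2 (lift ord0 i') (lift ord0 j') = [ffun x => coord2 i' j' (ctail x)].
  by apply/ffunP => x; apply/ffunP => t; rewrite !ffunE.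
exact/Delta1_tail/IH.
Qed.

Definition coface n (k : 'I_n) (x : cube n) : {ffun cube 1 -> cube n} :=
  [ffun b : cube 1 => [ffun t => if t == k then b ord0 else x t]].

Lemma Delta1_coface n (k : 'I_n) (x : cube n) : Delta1 (coface k x).
Proof.
elim: n k x => [[] // | n IH] k x; case: (ord_succP k) => [|k'].
  have -> : coface ord0 x =
      [ffun b : cube 1 => ccons (b ord0) ([ffun=> ctail x] (ctail b))].
    apply/ffunP => b; apply/ffunP => t.
    by case: (ord_succP t) => [|t']; rewrite !ffunE ?liftK ?unlift_none ?ffunE.
  exact/Delta1_keep_head/Delta1_from0.
have -> : coface (lift ord0 k') x =
    [ffun b : cube 1 => ccons (x ord0) (coface k' (ctail x) b)].
  apply/ffunP => b; apply/ffunP => t.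
  by case: (ord_succP t) => [|t'];
    rewrite !ffunE ?liftK ?unlift_none ?ffunE ?(inj_eq lift_inj).
exact/Delta1_cons/IH.
Qed.

Definition edge n (u v : cube n) : {ffun cube 1 -> cube n} :=
  [ffun b : cube 1 => if b ord0 then v else u].

Lemma compmap_edge m n (f : {ffun cube m -> cube n}) (u v : cube m) :
  compmap f (edge u v) = edge (f u) (f v).
Proof. by apply/ffunP => b; rewrite !ffunE; case: (b ord0). Qed.

Lemma Delta1_edge n (x y : cube n) : one_dim x y -> Delta1 (edge x y).
Proof.
case=> le_xy /eqP /cards1P [k Ek].
have neq_t t : (x t != y t) = (t == k) by rewrite -in_set1 -Ek inE.
have [xk yk] : x k = false /\ y k = true by apply: cle_neq; rewrite // neq_t.
suff -> : edge x y = coface k x by apply: Delta1_coface.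
apply/ffunP => b; apply/ffunP => t; rewrite !ffunE.
case: eqP => [-> | /eqP ne_tk]; case: (b ord0) => //.
by apply/esym/eqP/negPn; rewrite neq_t.
Qed.

Lemma coord2_edge n (u v : cube n) i j :
  cle u v -> u i != v i -> u j != v j -> compmap (coord2 i j) (edge u v) = diag.
Proof.
move=> le_uv /(cle_neq le_uv) [ui vi] /(cle_neq le_uv) [uj vj].
by apply/ffunP => b; apply/ffunP => t; rewrite !ffunE; case: (b ord0); case: ifP.
Qed.

Lemma card_gt1_ltn n (A : {set 'I_n}) :
  1 < #|A| -> exists i j, [/\ i \in A, j \in A & i < j].
Proof.
case/card_gt1P => i [j [Ai Aj neq_ij]].
case: (ltngtP i j) => [lt_ij | lt_ji | /val_inj eq_ij]; first by exists i, j.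
  by exists j, i.
by rewrite eq_ij eqxx in neq_ij.
Qed.

Lemma pair_intervalP n (x y : cube n) :
  cle x y -> is_interval [set x; y] <-> #|[set i | x i != y i]| <= 1.
Proof.
move=> le_xy; split.
  case=> a [z [_ Eaz]]; rewrite leqNgt; apply/negP => /card_gt1P [i [j []]].
  rewrite !inE => neq_i neq_j neq_ij.
  (* [w] lies between [x] and [y] but differs from [x] at [i] and from [y] at [j]. *)
  pose w : cube n := [ffun t => if t == i then y t else x t].
  have [xa xz] : cle a x /\ cle x z.
    by move: (set21 x y); rewrite Eaz inE => /andP.
  have [ya yz] : cle a y /\ cle y z.
    by move: (set22 x y); rewrite Eaz inE => /andP.
  have : w \in interval a z.
    rewrite inE (cle_trans xa) ?(cle_trans _ yz) //; apply/cleP => t;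
      by rewrite ffunE; case: ifP => // _ /(cleP _ _ le_xy).
  rewrite -Eaz !inE => /orP [] /eqP /ffunP.
    by move=> /(_ i); rewrite ffunE eqxx => /esym/eqP; rewrite (negbTE neq_i).
  by move=> /(_ j); rewrite ffunE eq_sym (negbTE neq_ij) => /eqP; rewrite (negbTE neq_j).
move=> /card_le1_eqP one_coord; exists x, y; split => //; apply/setP => w.
rewrite !inE; apply/idP/idP => [/orP [] /eqP -> | /andP [xw wy]].
1,2: by rewrite cle_refl le_xy.
apply/negPn/negP; rewrite negb_or eq_sym => /andP [nxw nwy].
have [i neq_i] := cube_neq nxw.
have [j neq_j] := cube_neq nwy.
have [xi wi] := cle_neq xw neq_i; have yi := cleP _ _ wy i wi.
have [wj yj] := cle_neq wy neq_j.
have xj : x j = false by apply/negP => /(cleP _ _ xw j); rewrite wj.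
have eq_ij : i = j by apply: one_coord; rewrite inE ?xi ?yi ?xj ?yj.
by move: wi; rewrite eq_ij wj.
Qed.

Lemma one_dim01 : one_dim ([ffun=> false] : cube 1) [ffun=> true].
Proof.
split; first by apply/cleP => i; rewrite ffunE.
rewrite (_ : [set i | _] = setT) ?cardsT ?card_ord //.
by apply/setP => i; rewrite !inE !ffunE.
Qed.

Lemma diag01_not_interval : ~ is_interval [set diag [ffun=> false]; diag [ffun=> true]].
Proof.
have le_diag01 : cle (diag [ffun=> false]) (diag [ffun=> true]).
  by apply/cleP => i; rewrite !ffunE.
move/(pair_intervalP le_diag01).
rewrite (_ : [set i | _] = setT) ?cardsT ?card_ord //.
by apply/setP => i; rewrite !inE !ffunE.
Qed.

Theorem mainTheorem6 (S : forall m n, {ffun cube m -> cube n} -> Prop) :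
  intermediate_cat S ->
  ((forall m n (f : {ffun cube m -> cube n}) (x y : cube m),
       S m n f -> one_dim x y -> is_interval (f @: [set x; y]))
   <-> ~ S 1 2 diag).
Proof.
case=> _ S_comp S_Delta1 S_mono; split.
  move=> S_interval S_diag; apply: diag01_not_interval.
  by have := S_interval _ _ _ _ _ S_diag one_dim01; rewrite imsetU1 imset_set1.
move=> no_diag m n f x y S_f xy; rewrite imsetU1 imset_set1.
have le_fxy : cle (f x) (f y) by apply: S_mono S_f _ _ xy.1.
apply/pair_intervalP => //; rewrite leqNgt; apply/negP => /card_gt1_ltn [i [j []]].
rewrite !inE => neq_i neq_j lt_ij; apply: no_diag.
rewrite -(coord2_edge le_fxy neq_i neq_j) -compmap_edge.
apply: S_comp (S_Delta1 _ _ _ (Delta1_coord2 lt_ij)) (S_comp _ _ _ _ _ S_f _).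
exact/S_Delta1/Delta1_edge.
Qed.
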